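(* Let $\gamma\colon[0,1]\to(0,1)^d$ be a $1$-Lipschitz curve which is $\theta$-flat in direction $u\in\mathbb{S}^{d-1}$ around an interval $R_0\subseteq[0,1]$, where $\theta\in(0,1/3)$. Let $(a,b)\subseteq R_0$, $q\in R_0\setminus(a,b)$, $r\in\mathbb{R}$, $\tau>0$, and let $h\colon[0,1]^d\to\mathbb{R}$ be a Lipschitz function with $h(x)=r+\tau\|x-\gamma(q)\|$ for $x\in\{\gamma(a),\gamma(b)\}$. Then, writing $(h\circ\gamma)\big|_a^b=h(\gamma(b))-h(\gamma(a))$, $$\big|(h\circ\gamma)\big|_a^b-\tau(b-a)\big|\leq 3\theta\tau(b-a)\quad\text{if } q\leq a\leq b,$$ $$\big|(h\circ\gamma)\big|_a^b-\tau(a-b)\big|\leq 3\theta\tau(b-a)\quad\text{if } a\leq b\leq q.$$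
   Context: A Lipschitz curve is a Lipschitz map $\gamma\colon I\to\mathbb{R}^d$, $I$ a closed interval, whose derivative is bounded away from zero in norm a.e. $\gamma$ is $\theta$-flat in direction $u$ around an interval $R_0$ if for all $t_1,t_2\in[0,1]$ with $\operatorname{dist}(t_i,R_0)<\mathcal{L}(R_0)$ (length of $R_0$) we have $\|\gamma(t_1)-\gamma(t_2)-(t_1-t_2)u\|\leq\theta|t_1-t_2|$. *)

From HB Require Import structures.
From mathcomp Require Import all_boot all_order all_algebra.
From mathcomp Require Import all_classical all_reals all_analysis.
Set Implicit Arguments. Unset Strict Implicit. Unset Printing Implicit Defensive.
Import Order.TTheory GRing.Theory Num.Theory.
Import numFieldNormedType.Exports.
Local Open Scope classical_set_scope.
Local Open Scope ring_scope.

Section Defs.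
Context {R : realType}.

Definition enorm (d : nat) (v : 'rV[R]_d) : R :=
  Num.sqrt (\sum_(i < d) (v ord0 i) ^+ 2).

Definition lip_on01 (d : nat) (L : R) (g : R -> 'rV[R]_d) : Prop :=
  forall s t : R, s \in `[0, 1] -> t \in `[0, 1] ->
    enorm (g s - g t) <= L * `|s - t|.

Definition lipschitz_curve (d : nat) (g : R -> 'rV[R]_d) : Prop :=
  (exists L : R, lip_on01 L g) /\
  (exists c : R, 0 < c /\
     (@lebesgue_measure R).-negligible
       [set t | t \in `[0, 1] /\ ~ (derivable g t 1 /\ c <= enorm ('D_1 g t))]).

(* theta-flat in direction u around the interval R0, where R0 is any interval
   with endpoints c0 <= c1 (so ]c0,c1[ <= R0 <= [c0,c1] and L(R0) = c1 - c0).
   dist(t,R0) < L(R0) is unfolded as: some s in R0 has |t - s| < L(R0). *)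
Definition flat_around (d : nat) (g : R -> 'rV[R]_d) (theta : R) (u : 'rV[R]_d)
    (R0 : set R) (c0 c1 : R) : Prop :=
  forall t1 t2 : R, t1 \in `[0, 1] -> t2 \in `[0, 1] ->
    (exists s, R0 s /\ `|t1 - s| < c1 - c0) ->
    (exists s, R0 s /\ `|t2 - s| < c1 - c0) ->
    enorm (g t1 - g t2 - (t1 - t2) *: u) <= theta * `|t1 - t2|.

Definition in_cube (d : nat) (x : 'rV[R]_d) : Prop :=
  forall i : 'I_d, 0 <= x ord0 i <= 1.
Definition in_open_cube (d : nat) (x : 'rV[R]_d) : Prop :=
  forall i : 'I_d, 0 < x ord0 i < 1.

End Defs.

(* In the case q <= a <= b put x := g a - g q, y := g b - g q, s := a - q and
   del := b - a; flatness gives |x - s u| <= theta s and |y - x - del u| <= theta del.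
   The triangle inequality bounds |y| - |x| above by (1 + theta) del.  Below, the
   identity (s + del) x = s (x + del u) + del (x - s u), together with
   |x| >= (1 - theta) s, gives |x + del u| >= |x| + (1 - 2 theta) del, hence
   |y| - |x| >= (1 - 3 theta) del.  Since h agrees with r + tau |. - g q| at g a and
   g b, multiplying by tau gives the claim; the case a <= b <= q is the same with u
   replaced by -u. *)

From HB Require Import structures.
From mathcomp Require Import all_boot all_order all_algebra.
From mathcomp Require Import all_classical all_reals all_analysis.
From mathcomp Require Import ring lra.
Import Order.TTheory GRing.Theory Num.Theory.
Import numFieldNormedType.Exports.
Local Open Scope classical_set_scope.
Local Open Scope ring_scope.

Section FlatIncrement.
Context {R : realType}.

Lemma sum_mul_sqr_le (I : finType) (x y : I -> R) :
  (\sum_i x i * y i) ^+ 2 <= (\sum_i x i ^+ 2) * (\sum_i y i ^+ 2).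
Proof.
have lagrange : \sum_i \sum_j (x i * y j - x j * y i) ^+ 2 =
    (\sum_i x i ^+ 2) * (\sum_i y i ^+ 2) + (\sum_i y i ^+ 2) * (\sum_i x i ^+ 2)
    - 2 * ((\sum_i x i * y i) * (\sum_i x i * y i)).
  rewrite !mulr_suml (mulr_sumr _ _ _ 2) -big_split -sumrB /=.
  apply: eq_bigr => i _; rewrite !mulr_sumr -big_split -sumrB /=.
  by apply: eq_bigr => j _; ring.
have : 0 <= \sum_i \sum_j (x i * y j - x j * y i) ^+ 2.
  by apply: sumr_ge0 => i _; apply: sumr_ge0 => j _; apply: sqr_ge0.
rewrite lagrange expr2; nra.
Qed.

Lemma enormD d (v w : 'rV[R]_d) : enorm (v + w) <= enorm v + enorm w.
Proof.
rewrite /enorm; set A := \sum_(i < d) v ord0 i ^+ 2.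
set C := \sum_(i < d) w ord0 i ^+ 2.
set B := \sum_(i < d) v ord0 i * w ord0 i.
have A0 : 0 <= A by apply: sumr_ge0 => i _; apply: sqr_ge0.
have C0 : 0 <= C by apply: sumr_ge0 => i _; apply: sqr_ge0.
have B_le : B <= Num.sqrt A * Num.sqrt C.
  rewrite -sqrtrM // (le_trans (ler_norm B)) // -sqrtr_sqr.
  exact/ler_wsqrtr/sum_mul_sqr_le.
have -> : \sum_(i < d) (v + w) ord0 i ^+ 2 = A + 2 * B + C.
  rewrite /A /B /C mulr_sumr -!big_split /=.
  by apply: eq_bigr => i _; rewrite mxE; ring.
rewrite -[leRHS]ger0_norm ?addr_ge0 ?sqrtr_ge0 // -sqrtr_sqr.
by apply: ler_wsqrtr; rewrite sqrrD !sqr_sqrtr //; lra.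
Qed.

Lemma enormZ d (c : R) (v : 'rV[R]_d) : enorm (c *: v) = `|c| * enorm v.
Proof.
rewrite /enorm -sqrtr_sqr -sqrtrM ?sqr_ge0 // mulr_sumr.
by congr Num.sqrt; apply: eq_bigr => i _; rewrite mxE exprMn.
Qed.

Section Seminorm.
Context {V : lmodType R} {N : V -> R}.
Hypotheses (ND : forall v w, N (v + w) <= N v + N w)
           (NZ : forall c v, N (c *: v) = `|c| * N v).

Lemma seminormN v : N (- v) = N v.
Proof. by rewrite -scaleN1r NZ normrN normr1 mul1r. Qed.

Lemma seminorm_ge0 v : 0 <= N v.
Proof.
have := ND v (- v); rewrite subrr -(scale0r (0 : V)) NZ normr0 mul0r seminormN.
lra.
Qed.

Context {u : V} {theta : R}.
Hypotheses (Nu : N u = 1) (theta_ge0 : 0 <= theta).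

Lemma seminorm_flat_step_ge (x : V) (s del : R) :
  0 <= s -> 0 <= del -> N (x - s *: u) <= theta * s ->
  N x + (1 - 2 * theta) * del <= N (x + del *: u).
Proof.
move=> s_ge0 del_ge0 flat_x.
have Ndelu : N (del *: u) = del by rewrite NZ Nu mulr1 ger0_norm.
have [s0 | s_neq0] := eqVneq s 0.
  move: flat_x; rewrite s0 mulr0 scale0r subr0 => Nx_le0.
  have := ND (x + del *: u) (- x).
  rewrite seminormN addrAC subrr add0r Ndelu; have := seminorm_ge0 x.
  have := mulr_ge0 theta_ge0 del_ge0; lra.
have s_gt0 : 0 < s by rewrite lt_def s_neq0.
have scaled_split : (s + del) *: x = s *: (x + del *: u) + del *: (x - s *: u).
  by rewrite scalerDl scalerDr scalerBr !scalerA mulrC addrACA subrr addr0.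
have := ND (s *: (x + del *: u)) (del *: (x - s *: u)).
rewrite -scaled_split !NZ !ger0_norm ?addr_ge0 // => mix.
have := ND (- (x - s *: u)) x.
rewrite seminormN opprB subrK NZ Nu mulr1 ger0_norm // => Nx_ge.
rewrite -(ler_pM2l s_gt0); nra.
Qed.

Lemma seminorm_flat_increment (x y : V) (s del : R) :
  0 <= s -> 0 <= del -> N (x - s *: u) <= theta * s ->
  N (y - x - del *: u) <= theta * del ->
  `|N y - N x - del| <= 3 * theta * del.
Proof.
move=> s_ge0 del_ge0 flat_x flat_yx.
have step := @seminorm_flat_step_ge x s del s_ge0 del_ge0 flat_x.
have y_split : y = (y - x - del *: u) + x + del *: u by rewrite addrAC !subrK.
have := ND (y - x - del *: u + x) (del *: u).
have := ND (y - x - del *: u) x.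
rewrite -y_split NZ Nu mulr1 ger0_norm // => upper1 upper2.
have := ND y (- (y - x - del *: u)).
have -> : y - (y - x - del *: u) = x + del *: u.
  by rewrite -addrA -opprD subKr.
rewrite seminormN => lower.
rewrite ler_norml; apply/andP; split; lra.
Qed.

End Seminorm.

Lemma itv_oo_sub_cc (a b lo hi : R) :
  a < b -> `]a, b[ `<=` `[lo, hi] -> lo <= a /\ b <= hi.
Proof.
move=> ab sub; split; rewrite leNgt; apply/negP => out.
  set m := Num.min b lo.
  have [mb mlo] : m <= b /\ m <= lo by apply/andP; rewrite -le_min.
  have am : a < m by rewrite lt_min ab.
  have /sub : (a + m) / 2 \in `]a, b[ by rewrite in_itv /=; apply/andP; split; lra.
  rewrite /= in_itv /= => /andP[]; lra.
set m := Num.max a hi.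
have [am him] : a <= m /\ hi <= m by apply/andP; rewrite -ge_max.
have mb : m < b by rewrite gt_max ab.
have /sub : (m + b) / 2 \in `]a, b[ by rewrite in_itv /=; apply/andP; split; lra.
rewrite /= in_itv /= => /andP[]; lra.
Qed.

Section CurveNearR0.
Context {d : nat} {g : R -> 'rV[R]_d} {theta : R} {u : 'rV[R]_d}.
Context {R0 : set R} {c0 c1 a b q : R}.
Hypotheses (u1 : enorm u = 1) (R0_hull : `]c0, c1[ `<=` R0)
  (R0_sub : R0 `<=` `[c0, c1]) (R0_01 : R0 `<=` `[0, 1])
  (theta_ge0 : 0 <= theta) (gflat : flat_around g theta u R0 c0 c1)
  (ab : a < b) (abR0 : `]a, b[ `<=` R0) (R0q : R0 q).

Definition near_R0 (t : R) :=
  t \in `[0, 1] /\ exists s, R0 s /\ `|t - s| < c1 - c0.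

Lemma flat_near {t1 t2} : near_R0 t1 -> near_R0 t2 ->
  enorm (g t1 - g t2 - (t1 - t2) *: u) <= theta * `|t1 - t2|.
Proof. by move=> [t1_01 t1_near] [t2_01 t2_near]; exact: gflat. Qed.

Lemma hull_bounds : c0 <= a /\ b <= c1.
Proof. by apply: itv_oo_sub_cc => // t /abR0 /R0_sub. Qed.

Lemma c0_lt_c1 : c0 < c1.
Proof.
by have [c0a bc1] := hull_bounds; apply: le_lt_trans c0a (lt_le_trans ab bc1).
Qed.

Lemma hull_sub01 : 0 <= c0 /\ c1 <= 1.
Proof. by apply: itv_oo_sub_cc c0_lt_c1 _ => t /R0_hull /R0_01. Qed.

Lemma near_R0_mem t : R0 t -> near_R0 t.
Proof.
move=> R0t; split; first exact: R0_01.
by exists t; rewrite subrr normr0 subr_gt0 c0_lt_c1.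
Qed.

Lemma near_R0_ends : near_R0 a /\ near_R0 b.
Proof.
(* lra does not see section hypotheses, hence the local copy of [ab]. *)
have [c0a bc1] := hull_bounds; have [c00 c11] := hull_sub01; have a_lt_b := ab.
have R0m : R0 ((a + b) / 2) by apply: abR0; rewrite /= in_itv /=; apply/andP; split; lra.
have near_between t : a <= t <= b -> near_R0 t.
  move=> /andP[a_le_t t_le_b].
  split; first by rewrite in_itv /=; apply/andP; split; lra.
  by exists ((a + b) / 2); split => //; rewrite ltr_norml; apply/andP; split; lra.
by split; apply: near_between; rewrite lexx ltW.
Qed.

Lemma enorm_increment_after : q <= a ->
  `|enorm (g b - g q) - enorm (g a - g q) - (b - a)| <= 3 * theta * (b - a).
Proof.
move=> qa; have [near_a near_b] := near_R0_ends.
have near_q : near_R0 q by exact: near_R0_mem.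
have aq_ge0 : 0 <= a - q by rewrite subr_ge0.
have ba_ge0 : 0 <= b - a by rewrite subr_ge0 ltW.
apply: (seminorm_flat_increment (enormD d) (enormZ d) u1 theta_ge0 _ _ _ _
  aq_ge0 ba_ge0).
  by have := flat_near near_a near_q; rewrite ger0_norm.
by rewrite opprB addrA subrK; have := flat_near near_b near_a; rewrite ger0_norm.
Qed.

Lemma enorm_increment_before : b <= q ->
  `|enorm (g a - g q) - enorm (g b - g q) - (b - a)| <= 3 * theta * (b - a).
Proof.
move=> bq; have [near_a near_b] := near_R0_ends.
have near_q : near_R0 q by exact: near_R0_mem.
have qb_ge0 : 0 <= q - b by rewrite subr_ge0.
have ba_ge0 : 0 <= b - a by rewrite subr_ge0 ltW.
have u1N : enorm (- u) = 1 by rewrite (seminormN (enormZ d)).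
apply: (seminorm_flat_increment (enormD d) (enormZ d) u1N theta_ge0 _ _ _ _
  qb_ge0 ba_ge0).
  rewrite scalerN -scaleNr opprB.
  by have := flat_near near_b near_q; rewrite distrC ger0_norm.
rewrite scalerN -scaleNr !opprB addrA subrK.
by have := flat_near near_a near_b; rewrite distrC ger0_norm.
Qed.

End CurveNearR0.
End FlatIncrement.

Theorem lemma3p11 (R : realType) (d : nat) (g : R -> 'rV[R]_d) (theta : R)
    (u : 'rV[R]_d) (R0 : set R) (c0 c1 : R) (a b q r tau : R)
    (h : 'rV[R]_d -> R) :
  (forall t, t \in `[0, 1] -> in_open_cube (g t)) ->
  lipschitz_curve g -> lip_on01 1 g ->
  enorm u = 1 ->
  c0 <= c1 -> `]c0, c1[ `<=` R0 -> R0 `<=` `[c0, c1] -> R0 `<=` `[0, 1] ->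
  0 < theta -> theta < 1 / 3 ->
  flat_around g theta u R0 c0 c1 ->
  `]a, b[ `<=` R0 -> R0 q -> ~ (q \in `]a, b[) ->
  0 < tau ->
  (exists L : R, forall x y, in_cube x -> in_cube y -> `|h x - h y| <= L * enorm (x - y)) ->
  h (g a) = r + tau * enorm (g a - g q) ->
  h (g b) = r + tau * enorm (g b - g q) ->
  (q <= a -> a <= b ->
     `|(h (g b) - h (g a)) - tau * (b - a)| <= 3 * theta * tau * (b - a)) /\
  (a <= b -> b <= q ->
     `|(h (g b) - h (g a)) - tau * (a - b)| <= 3 * theta * tau * (b - a)).
Proof.
move=> _ _ _ u1 _ R0_hull R0_sub R0_01 theta_gt0 _ gflat abR0 R0q _ tau_gt0 _ ha hb.
have theta_ge0 := ltW theta_gt0.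
have scale z :
    `|z| <= 3 * theta * (b - a) -> `|tau * z| <= 3 * theta * tau * (b - a).
  by move=> z_le; rewrite normrM gtr0_norm // -mulrA mulrCA ler_pM2l.
have increment_after := enorm_increment_after u1 R0_hull R0_sub R0_01 theta_ge0
  gflat _ abR0 R0q.
have increment_before := enorm_increment_before u1 R0_hull R0_sub R0_01 theta_ge0
  gflat _ abR0 R0q.
rewrite ha hb; split=> [qa|]; rewrite le_eqVlt => /predU1P[<- | ab] //.
- by rewrite !subrr !mulr0 subr0 normr0.
- rewrite (_ : _ - _ - _ =
      tau * (enorm (g b - g q) - enorm (g a - g q) - (b - a))); last by ring.
  exact/scale/increment_after.
- by move=> _; rewrite !subrr !mulr0 subr0 normr0.
move=> bq; rewrite (_ : _ - _ - _ =
    tau * - (enorm (g a - g q) - enorm (g b - g q) - (b - a))); last by ring.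
by apply: scale; rewrite normrN; exact: increment_before.
Qed.
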